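(* Let $\mathbb X=\langle X,\rho\rangle$ be the Rado graph (countable random graph; $\rho$ symmetric irreflexive), let $x,y\in X$ with $\langle x,y\rangle\in\rho$, and let $\mathbb Y=\langle X,\sigma\rangle$ where $\sigma=\rho\setminus\{\langle x,y\rangle\}$. Then $\mathbb X\sim_c\mathbb Y$ and $\mathbb X\not\equiv\mathbb Y$.
   Context: The language has one binary relation symbol. A condensation from $\langle X,\rho\rangle$ onto $\langle Y,\sigma\rangle$ is a bijection $F:X\to Y$ with $\langle a,b\rangle\in\rho\Rightarrow\langle F(a),F(b)\rangle\in\sigma$; $\mathbb X\sim_c\mathbb Y$ means condensations exist in both directions. $\equiv$ denotes first order elementary equivalence. *)

From Stdlib Require Import List Arith.
Import ListNotations.

Definition countable (X : Type) : Prop :=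
  exists f : X -> nat, forall a b, f a = f b -> a = b.

Definition is_rado_graph (X : Type) (rho : X -> X -> Prop) : Prop :=
  countable X /\
  (forall a b, rho a b -> rho b a) /\
  (forall a, ~ rho a a) /\
  (forall U V : list X, (forall u, In u U -> ~ In u V) ->
     exists z, ~ In z U /\ ~ In z V /\
       (forall u, In u U -> rho z u) /\ (forall v, In v V -> ~ rho z v)).

Definition condensation {X Y : Type} (rho : X -> X -> Prop) (sigma : Y -> Y -> Prop)
  (F : X -> Y) : Prop :=
  (forall a b, F a = F b -> a = b) /\ (forall c, exists a, F a = c) /\
  (forall a b, rho a b -> sigma (F a) (F b)).

Definition condensable {X Y : Type} (rho : X -> X -> Prop) (sigma : Y -> Y -> Prop) : Prop :=
  exists F : X -> Y, condensation rho sigma F.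

Definition cond_equiv {X Y : Type} (rho : X -> X -> Prop) (sigma : Y -> Y -> Prop) : Prop :=
  condensable rho sigma /\ condensable sigma rho.

(* First-order logic with equality and one binary relation symbol R.
   Variables are named by natural numbers. *)
Inductive form : Type :=
| FEq  : nat -> nat -> form
| FRel : nat -> nat -> form
| FBot : form
| FImp : form -> form -> form
| FAll : nat -> form -> form.

Definition upd {X : Type} (e : nat -> X) (i : nat) (a : X) : nat -> X :=
  fun j => if Nat.eqb j i then a else e j.

Fixpoint sat {X : Type} (rho : X -> X -> Prop) (e : nat -> X) (f : form) : Prop :=
  match f with
  | FEq i j => e i = e j
  | FRel i j => rho (e i) (e j)
  | FBot => False
  | FImp f g => sat rho e f -> sat rho e g
  | FAll i f => forall a : X, sat rho (upd e i a) f
  end.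

Fixpoint free (k : nat) (f : form) : Prop :=
  match f with
  | FEq i j | FRel i j => k = i \/ k = j
  | FBot => False
  | FImp f g => free k f \/ free k g
  | FAll i f => k <> i /\ free k f
  end.

Definition sentence (f : form) : Prop := forall k, ~ free k f.

Definition models {X : Type} (rho : X -> X -> Prop) (f : form) : Prop :=
  forall e : nat -> X, sat rho e f.

Definition elem_equiv {X Y : Type} (rho : X -> X -> Prop) (sigma : Y -> Y -> Prop) : Prop :=
  forall f, sentence f -> (models rho f <-> models sigma f).

From Stdlib Require Import List Lia ClassicalEpsilon.
Import ListNotations.

(* Deleting both orientations of the edge {x, y} leaves a Rado graph, because
   extension witnesses can always be chosen outside {x, y}. By back and forth
   this graph is isomorphic to rho, and the isomorphism is a condensation of
   rho onto sigma, which contains it; the identity condenses sigma onto rho.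
   Since sigma keeps (y, x) but not (x, y), it falsifies the symmetry sentence
   which rho satisfies. *)

Definition extension_property {X : Type} (r : X -> X -> Prop) : Prop :=
  forall U V : list X, (forall u, In u U -> ~ In u V) ->
  exists z, ~ In z U /\ ~ In z V /\
    (forall u, In u U -> r z u) /\ (forall v, In v V -> ~ r z v).

Lemma inhabited_of_extension_property {X : Type} (r : X -> X -> Prop) :
  extension_property r -> inhabited X.
Proof. intros Hr; destruct (Hr [] []) as [z _]; [intros _ []|exact (inhabits z)]. Qed.

Definition graph_iso {X Y : Type} (r : X -> X -> Prop) (s : Y -> Y -> Prop)
  (F : X -> Y) : Prop :=
  (forall a b, F a = F b -> a = b) /\ (forall c, exists a, F a = c) /\
  (forall a b, r a b <-> s (F a) (F b)).

Lemma condensation_of_graph_iso {X Y : Type} (r : X -> X -> Prop) (s : Y -> Y -> Prop)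
  (F : X -> Y) : graph_iso r s F -> condensation r s F.
Proof. intros (Finj & Fsurj & Fhom); repeat split; auto; apply Fhom. Qed.

Lemma condensation_weaken {X Y : Type} (r : X -> X -> Prop) (s s' : Y -> Y -> Prop)
  (F : X -> Y) :
  (forall a b, s a b -> s' a b) -> condensation r s F -> condensation r s' F.
Proof. intros Hss' (Finj & Fsurj & Fhom); repeat split; auto. Qed.

Lemma condensation_id {X : Type} (r s : X -> X -> Prop) :
  (forall a b, r a b -> s a b) -> condensation r s (fun a => a).
Proof. repeat split; eauto. Qed.

Section PartialIso.
Variables (X Y : Type) (r : X -> X -> Prop) (s : Y -> Y -> Prop).

Definition coherent (a : X) (b : Y) (a' : X) (b' : Y) : Prop :=
  (a = a' <-> b = b') /\ (r a a' <-> s b b').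

Definition partial_iso (L : list (X * Y)) : Prop :=
  forall a b a' b', In (a, b) L -> In (a', b') L -> coherent a b a' b'.

Lemma partition_by_relation (a : X) (L : list (X * Y)) :
  exists U V : list Y,
    (forall b, In b U <-> exists a', In (a', b) L /\ r a a') /\
    (forall b, In b V <-> exists a', In (a', b) L /\ ~ r a a').
Proof.
  set (P (p : X * Y) := if excluded_middle_informative (r a (fst p)) then true else false).
  exists (map snd (filter P L)), (map snd (filter (fun p => negb (P p)) L)).
  split; intro b; rewrite in_map_iff; setoid_rewrite filter_In; unfold P;
    split; [intros ([a' b'] & <- & Hin & HP)|intros (a' & Hin & Ha')
           |intros ([a' b'] & <- & Hin & HP)|intros (a' & Hin & Ha')];
    simpl in *; try (exists (a', b); simpl);
    destruct excluded_middle_informative; eauto; discriminate.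
Qed.

Hypotheses (rsym : forall a b, r a b -> r b a) (ssym : forall a b, s a b -> s b a).
Hypotheses (rirr : forall a, ~ r a a) (sirr : forall b, ~ s b b).

Lemma coherent_sym a b a' b' : coherent a b a' b' -> coherent a' b' a b.
Proof.
  intros [[Hab Hba] [Hr Hs]]; repeat split; intros H.
  - symmetry; apply Hab; congruence.
  - symmetry; apply Hba; congruence.
  - apply ssym, Hr, rsym, H.
  - apply rsym, Hs, ssym, H.
Qed.

Lemma partial_iso_cons L a b :
  partial_iso L ->
  (forall a' b', In (a', b') L -> coherent a b a' b') ->
  partial_iso ((a, b) :: L).
Proof.
  intros HL Hab a1 b1 a2 b2 [E1|H1] [E2|H2];
    try injection E1 as <- <-; try injection E2 as <- <-; auto.
  - split; split; intros H; auto; [exfalso; exact (rirr _ H)|exfalso; exact (sirr _ H)].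
  - now apply coherent_sym, Hab.
Qed.

Lemma partial_iso_forth L a :
  extension_property s -> partial_iso L -> exists b, partial_iso ((a, b) :: L).
Proof.
  intros sext HL.
  destruct (classic (exists b, In (a, b) L)) as [[b Hb]|Hnew].
  { exists b; apply partial_iso_cons; auto. }
  destruct (partition_by_relation a L) as (U & V & HU & HV).
  destruct (sext U V) as (z & zU & zV & HzU & HzV).
  { intros b HbU HbV.
    apply HU in HbU as (a1 & H1 & R1); apply HV in HbV as (a2 & H2 & R2).
    assert (a1 = a2) as <- by now apply (HL _ _ _ _ H1 H2).
    contradiction. }
  exists z; apply partial_iso_cons; auto.
  intros a' b' H'.
  destruct (classic (r a a')) as [R|R].
  - assert (In b' U) by (apply HU; eauto).
    split; split; intros E; subst; auto; exfalso; eauto.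
  - assert (In b' V) by (apply HV; eauto).
    split; split; intros E; subst; try contradiction; exfalso; eauto.
    eapply HzV; eauto.
Qed.

End PartialIso.

Arguments coherent {X Y}.
Arguments partial_iso {X Y}.

Definition swap {X Y : Type} (L : list (X * Y)) : list (Y * X) :=
  map (fun p => (snd p, fst p)) L.

Lemma swap_involutive {X Y : Type} (L : list (X * Y)) : swap (swap L) = L.
Proof. induction L as [|[a b] L IH]; simpl; congruence. Qed.

Lemma in_swap {X Y : Type} (L : list (X * Y)) a b : In (b, a) (swap L) <-> In (a, b) L.
Proof.
  unfold swap; rewrite in_map_iff; split.
  - now intros ([a' b'] & [= <- <-] & H).
  - intros H; now exists (a, b).
Qed.

Lemma partial_iso_swap {X Y : Type} (r : X -> X -> Prop) (s : Y -> Y -> Prop) L :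
  partial_iso r s L -> partial_iso s r (swap L).
Proof.
  intros HL b a b' a' H H'; rewrite in_swap in H, H'.
  destruct (HL _ _ _ _ H H') as [[] []]; repeat split; auto.
Qed.

Lemma partial_iso_back {X Y : Type} (r : X -> X -> Prop) (s : Y -> Y -> Prop) L b :
  (forall a a', r a a' -> r a' a) -> (forall b b', s b b' -> s b' b) ->
  (forall a, ~ r a a) -> (forall b, ~ s b b) ->
  extension_property r -> partial_iso r s L -> exists a, partial_iso r s ((a, b) :: L).
Proof.
  intros rsym ssym rirr sirr rext HL.
  destruct (partial_iso_forth _ _ s r ssym rsym sirr rirr (swap L) b rext
              (partial_iso_swap r s L HL)) as [a Ha].
  exists a; rewrite <- swap_involutive; exact (partial_iso_swap s r _ Ha).
Qed.

Lemma graph_iso_of_coherent_relation {X Y : Type} (r : X -> X -> Prop) (s : Y -> Y -> Prop)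
  (G : X -> Y -> Prop) :
  inhabited Y ->
  (forall a b a' b', G a b -> G a' b' -> coherent r s a b a' b') ->
  (forall a, exists b, G a b) -> (forall b, exists a, G a b) ->
  exists F, graph_iso r s F.
Proof.
  intros inhY Gcoh Gtotal Gonto.
  set (F a := epsilon inhY (G a)).
  assert (HF : forall a, G a (F a)) by (intro a; exact (epsilon_spec inhY (G a) (Gtotal a))).
  exists F; split; [|split].
  - intros a a' E; apply (Gcoh _ _ _ _ (HF a) (HF a')), E.
  - intros c; destruct (Gonto c) as [a Ha]; exists a.
    apply (Gcoh _ _ _ _ (HF a) Ha); reflexivity.
  - intros a a'; apply (Gcoh _ _ _ _ (HF a) (HF a')).
Qed.

Definition decode {X : Type} (inh : inhabited X) (f : X -> nat) (n : nat) : X :=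
  epsilon inh (fun a => f a = n).

Lemma decode_encode {X : Type} (inh : inhabited X) (f : X -> nat) a :
  (forall a b, f a = f b -> a = b) -> decode inh f (f a) = a.
Proof.
  intros finj; apply finj; unfold decode.
  apply (epsilon_spec inh (fun c => f c = f a)); eauto.
Qed.

Section BackAndForth.
Variables (X Y : Type) (r : X -> X -> Prop) (s : Y -> Y -> Prop).
Hypotheses (rsym : forall a b, r a b -> r b a) (ssym : forall a b, s a b -> s b a).
Hypotheses (rirr : forall a, ~ r a a) (sirr : forall b, ~ s b b).
Hypotheses (rext : extension_property r) (sext : extension_property s).
Variables (fX : X -> nat) (fY : Y -> nat).
Hypotheses (fX_inj : forall a b, fX a = fX b -> a = b) (fY_inj : forall a b, fY a = fY b -> a = b).

Let inhX : inhabited X := inhabited_of_extension_property r rext.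
Let inhY : inhabited Y := inhabited_of_extension_property s sext.

Definition forth_step (L : list (X * Y)) (a : X) : Y :=
  epsilon inhY (fun b => partial_iso r s ((a, b) :: L)).

Definition back_step (L : list (X * Y)) (b : Y) : X :=
  epsilon inhX (fun a => partial_iso r s ((a, b) :: L)).

(* When [n] is not a code, [decode] returns an arbitrary element; that is
   harmless, every stage is a partial isomorphism whatever is added. *)
Fixpoint approx (n : nat) : list (X * Y) :=
  match n with
  | 0 => []
  | S n =>
      let a := decode inhX fX n in
      let b := decode inhY fY n in
      let L := (a, forth_step (approx n) a) :: approx n in
      (back_step L b, b) :: L
  end.

Lemma approx_partial_iso n : partial_iso r s (approx n).
Proof.
  induction n as [|n IH]; simpl; [intros ? ? ? ? []|].
  assert (Hf : forall L a, partial_iso r s L -> partial_iso r s ((a, forth_step L a) :: L))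
    by (intros L a HL; exact (epsilon_spec inhY _ (partial_iso_forth X Y r s rsym ssym
                                                       rirr sirr L a sext HL))).
  assert (Hb : forall L b, partial_iso r s L -> partial_iso r s ((back_step L b, b) :: L))
    by (intros L b HL; exact (epsilon_spec inhX _ (partial_iso_back r s L b rsym ssym
                                                       rirr sirr rext HL))).
  auto.
Qed.

Lemma approx_incl n m : n <= m -> incl (approx n) (approx m).
Proof. induction 1; [apply incl_refl|simpl; auto using incl_tl]. Qed.

Definition limit (a : X) (b : Y) : Prop := exists n, In (a, b) (approx n).

Lemma limit_coherent a b a' b' : limit a b -> limit a' b' -> coherent r s a b a' b'.
Proof.
  intros [n H] [n' H'].
  apply (approx_partial_iso (max n n'));
    [apply (approx_incl n)|apply (approx_incl n')]; auto; lia.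
Qed.

Lemma limit_total a : exists b, limit a b.
Proof. eexists; exists (S (fX a)); simpl; rewrite decode_encode by auto; auto. Qed.

Lemma limit_onto b : exists a, limit a b.
Proof. eexists; exists (S (fY b)); simpl; rewrite decode_encode by auto; auto. Qed.

End BackAndForth.

Theorem rado_graph_unique (X Y : Type) (r : X -> X -> Prop) (s : Y -> Y -> Prop) :
  is_rado_graph X r -> is_rado_graph Y s -> exists F, graph_iso r s F.
Proof.
  intros ([fX fX_inj] & rsym & rirr & rext) ([fY fY_inj] & ssym & sirr & sext).
  apply (graph_iso_of_coherent_relation r s
           (limit X Y r s rext sext fX fY)).
  - exact (inhabited_of_extension_property s sext).
  - now apply limit_coherent.
  - apply limit_total; auto.
  - apply limit_onto; auto.
Qed.

Definition remove_edge {X : Type} (r : X -> X -> Prop) (x y : X) (a b : X) : Prop :=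
  r a b /\ ~ (a = x /\ b = y) /\ ~ (a = y /\ b = x).

Lemma extension_property_avoiding {X : Type} (r : X -> X -> Prop) (W : list X) :
  extension_property r ->
  forall U V : list X, (forall u, In u U -> ~ In u V) ->
  exists z, ~ In z U /\ ~ In z V /\ ~ In z W /\
    (forall u, In u U -> r z u) /\ (forall v, In v V -> ~ r z v).
Proof.
  intros rext; induction W as [|w W IH]; intros U V HUV.
  - destruct (rext U V HUV) as (z & ?); exists z; simpl; tauto.
  - destruct (classic (In w U)) as [Hw|Hw].
    + destruct (IH U V HUV) as (z & zU & zV & zW & Hz).
      exists z; simpl; repeat split; try tauto.
      intros [<-|]; contradiction.
    + destruct (IH U (w :: V)) as (z & zU & zV & zW & HzU & HzV).
      { intros u Hu [<-|]; [contradiction|eapply HUV; eauto]. }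
      exists z; simpl in *; repeat split; try tauto; auto.
Qed.

Lemma is_rado_graph_remove_edge {X : Type} (r : X -> X -> Prop) (x y : X) :
  is_rado_graph X r -> is_rado_graph X (remove_edge r x y).
Proof.
  intros (Hc & rsym & rirr & rext).
  split; [exact Hc|split; [|split]].
  - intros a b (R & H1 & H2); repeat split; auto; tauto.
  - intros a (R & _); exact (rirr a R).
  - intros U V HUV.
    destruct (extension_property_avoiding r [x; y] rext U V HUV)
      as (z & zU & zV & zxy & HzU & HzV).
    exists z; simpl in zxy; repeat split; auto.
    + intros [<- _]; tauto.
    + intros [<- _]; tauto.
    + intros v Hv (R & _); exact (HzV v Hv R).
Qed.

Definition symmetry_sentence : form := FAll 0 (FAll 1 (FImp (FRel 0 1) (FRel 1 0))).

Lemma sentence_symmetry_sentence : sentence symmetry_sentence.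
Proof. intros k; simpl; lia. Qed.

Lemma models_symmetry_sentence {X : Type} (r : X -> X -> Prop) :
  models r symmetry_sentence <-> (forall a b, r a b -> r b a).
Proof.
  split.
  - intros H a b; exact (H (fun _ => a) a b).
  - intros H e a b; exact (H a b).
Qed.

Theorem mainTheorem13 (X : Type) (rho : X -> X -> Prop) (x y : X)
  (Hrado : is_rado_graph X rho) (Hxy : rho x y) :
  let sigma := fun a b : X => rho a b /\ ~ (a = x /\ b = y) in
  cond_equiv rho sigma /\ ~ elem_equiv rho sigma.
Proof.
  intros sigma.
  pose proof Hrado as (_ & rsym & rirr & _).
  assert (Hyx : y <> x) by (intros ->; exact (rirr x Hxy)).
  destruct (rado_graph_unique X X rho (remove_edge rho x y) Hrado
              (is_rado_graph_remove_edge rho x y Hrado)) as [F HF].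
  split; [split|].
  - exists F; apply (condensation_weaken _ (remove_edge rho x y));
      [intros a b (R & H & _); split; auto|now apply condensation_of_graph_iso].
  - exists (fun a => a); apply condensation_id; intros a b []; auto.
  - intros Hequiv.
    assert (sigma_sym : forall a b, sigma a b -> sigma b a).
    { apply models_symmetry_sentence, Hequiv, models_symmetry_sentence;
        [apply sentence_symmetry_sentence|exact rsym]. }
    destruct (sigma_sym y x) as [_ Hn]; [split; auto; tauto|tauto].
Qed.
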